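(* If $p<2q$, then $\rho(\mathcal{L}_\omega(\widehat{\mathcal{T}_{p/q}}))=\rho(\mathcal{L}_\omega(\mathcal{T}_{p/q}))$, where $\mathcal{L}_\omega(\mathcal{X})$ denotes the set of infinite words accepted by the automaton $\mathcal{X}$ and $\rho$ is applied elementwise.
   Context: Let $p>q>1$ be coprime integers, $A_p=\{0,\dots,p-1\}$ and $B=\{p-(2q-1),\dots,p-1\}$. For $n\in\mathbb{N}$ and $a\in\mathbb{Z}$, let $\tau(n,a)=\frac{np+a}{q}$, defined only when $q$ divides $np+a$. Let $\mathcal{T}_{p/q}$ (resp. $\widehat{\mathcal{T}_{p/q}}$) be the deterministic automaton with state set $\mathbb{N}$, alphabet $A_p$ (resp. $B$), initial state $0$, and transitions $n\xrightarrow{a}\tau(n,a)$ for $a$ in the alphabet with $\tau(n,a)$ defined. An infinite word is accepted if each of its finite prefixes labels a path starting at $0$. For an infinite word $a_1a_2\cdots$ of integers, $\rho(a_1a_2\cdots)=\sum_{i\ge 1} a_i\left(\frac{p}{q}\right)^{-i}$. *)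

From Stdlib Require Import ZArith Reals.
Open Scope Z_scope.

Definition alphA (p : Z) (a : Z) : Prop := 0 <= a <= p - 1.

Definition alphB (p q : Z) (a : Z) : Prop := p - (2 * q - 1) <= a <= p - 1.

(* Infinite words are w : nat -> Z, with w i the letter a_{i+1}.
   The automaton T with alphabet [alph] has state set N, initial state 0 and
   transitions n --a--> tau(n,a) = (n p + a)/q, defined when q | n p + a
   (and the value is a state, i.e. in N). Since the automaton is deterministic,
   "every finite prefix labels a path from 0" is equivalent to the existence of
   the (unique) infinite run s : nat -> Z with s 0 = 0 and
   s (i+1) = tau(s i, w i). *)
Definition accepted (p q : Z) (alph : Z -> Prop) (w : nat -> Z) : Prop :=
  exists s : nat -> Z,
    s 0%nat = 0 /\
    forall i : nat,
      alph (w i) /\ 0 <= s (S i) /\ q * s (S i) = s i * p + w i.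

(* rho(a_1 a_2 ...) = sum_{i>=1} a_i (p/q)^{-i}, as a relation "the series
   converges to x". *)
Definition rho_is (p q : Z) (w : nat -> Z) (x : R) : Prop :=
  infinite_sum (fun i : nat => (IZR (w i) * (IZR q / IZR p) ^ (S i))%R) x.

Definition rho_lang (p q : Z) (alph : Z -> Prop) (x : R) : Prop :=
  exists w : nat -> Z, accepted p q alph w /\ rho_is p q w x.

(* A run over B can be pushed down to a run over A_p that stays within a
   bounded distance of it.  The states of an A_p-run are exactly the chains
   r_k = floor (q r_(k+1) / p) starting from 0; given a B-run s, the sequence
   j |-> floor(q ./p)^j (s_(k+j)) is nonincreasing, and its eventual value r_k
   is such a chain with 0 <= s_k - r_k <= 2q - 2.  Since the partial sums of
   rho telescope to q s_(n+1) (q/p)^(n+1), a bounded gap between the states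
   does not change the value of rho.  Conversely A_p is a subset of B as soon
   as p < 2q. *)

From Stdlib Require Import ZArith Reals Wf_nat Lia Lra Classical ClassicalEpsilon.

Open Scope Z_scope.

Lemma accepted_sub (p q : Z) (alph alph' : Z -> Prop) (w : nat -> Z) :
  (forall a, alph a -> alph' a) -> accepted p q alph w -> accepted p q alph' w.
Proof.
  intros Hsub [s [Hs0 Hs]]; exists s; split; [exact Hs0|].
  intro i; destruct (Hs i) as [Ha Hrun]; auto.
Qed.

Lemma alphA_sub_alphB (p q a : Z) : p < 2 * q -> alphA p a -> alphB p q a.
Proof. unfold alphA, alphB; lia. Qed.

Lemma nonneg_seq_has_min (g : nat -> Z) :
  (forall j, 0 <= g j) -> exists j0, forall j, g j0 <= g j.
Proof.
  intros Hg.
  set (P := fun m => exists j, Z.to_nat (g j) = m).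
  destruct (dec_inh_nat_subset_has_unique_least_element P
              (fun m => classic (P m)) (ex_intro _ _ (ex_intro _ 0%nat eq_refl)))
    as [m [[[j0 Hj0] Hmin] _]].
  exists j0; intro j.
  specialize (Hmin _ (ex_intro _ j eq_refl)).
  pose proof (Hg j); pose proof (Hg j0); lia.
Qed.

Lemma nonincreasing_le (g : nat -> Z) :
  (forall j, g (S j) <= g j) -> forall j j', (j <= j')%nat -> g j' <= g j.
Proof.
  intros Hdec j j' Hjj'; induction Hjj' as [|j' _ IH]; [lia|].
  specialize (Hdec j'); lia.
Qed.

Lemma nonincreasing_min_stable (g : nat -> Z) (j0 : nat) :
  (forall j, g (S j) <= g j) -> (forall j, g j0 <= g j) ->
  forall j, (j0 <= j)%nat -> g j = g j0.
Proof.
  intros Hdec Hmin j Hj.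
  pose proof (nonincreasing_le g Hdec j0 j Hj); specialize (Hmin j); lia.
Qed.

Section Backward.

Variables p q : Z.
Hypothesis one_lt_q : 1 < q.
Hypothesis q_lt_p : q < p.

(* The A_p-transitions into state n come only from floor (q n / p). *)
Definition pred_state (n : Z) : Z := q * n / p.

Lemma pred_state_spec (n : Z) :
  p * pred_state n <= q * n < p * pred_state n + p.
Proof.
  unfold pred_state.
  pose proof (Z.div_mod (q * n) p ltac:(lia)).
  pose proof (Z.mod_pos_bound (q * n) p ltac:(lia)); lia.
Qed.

Lemma pred_state_mono (n m : Z) : n <= m -> pred_state n <= pred_state m.
Proof.
  intros Hnm; apply Z.div_le_mono; [lia|].
  apply Z.mul_le_mono_nonneg_l; lia.
Qed.

Lemma pred_state_nonneg (n : Z) : 0 <= n -> 0 <= pred_state n.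
Proof. intros Hn; apply Z.div_pos; [apply Z.mul_nonneg_nonneg|]; lia. Qed.

Lemma iter_pred_state_mono (j : nat) (n m : Z) :
  n <= m -> Nat.iter j pred_state n <= Nat.iter j pred_state m.
Proof.
  induction j as [|j IH]; intros Hnm; [exact Hnm|].
  apply pred_state_mono, IH, Hnm.
Qed.

Lemma iter_pred_state_nonneg (j : nat) (n : Z) :
  0 <= n -> 0 <= Nat.iter j pred_state n.
Proof.
  induction j as [|j IH]; intros Hn; [exact Hn|].
  apply pred_state_nonneg, IH, Hn.
Qed.

Lemma accepted_alphA_of_pred_chain (r : nat -> Z) :
  r 0%nat = 0 -> (forall k, 0 <= r k) -> (forall k, r k = pred_state (r (S k))) ->
  accepted p q (alphA p) (fun i => q * r (S i) - r i * p).
Proof.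
  intros Hr0 Hnn Hchain; exists r; split; [exact Hr0|].
  intro i; pose proof (pred_state_spec (r (S i))).
  rewrite <- Hchain in *; specialize (Hnn (S i)); unfold alphA; lia.
Qed.

Section BRun.

Variables s w : nat -> Z.
Hypothesis s0 : s 0%nat = 0.
Hypothesis s_step :
  forall i, alphB p q (w i) /\ 0 <= s (S i) /\ q * s (S i) = s i * p + w i.

Lemma Brun_nonneg (k : nat) : 0 <= s k.
Proof. destruct k; [lia | apply s_step]. Qed.

Lemma pred_state_Brun (k : nat) : pred_state (s (S k)) <= s k.
Proof.
  pose proof (pred_state_spec (s (S k))).
  destruct (s_step k) as [Hw [_ Hrun]]; unfold alphB in Hw; nia.
Qed.

Definition pullback (k j : nat) : Z := Nat.iter j pred_state (s (k + j)).

Lemma pullback_0 (k : nat) : pullback k 0 = s k.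
Proof. unfold pullback; simpl; rewrite Nat.add_0_r; reflexivity. Qed.

Lemma pullback_S (k j : nat) : pullback k (S j) = pred_state (pullback (S k) j).
Proof. unfold pullback; rewrite Nat.add_succ_r; reflexivity. Qed.

Lemma pullback_nonneg (k j : nat) : 0 <= pullback k j.
Proof.
  apply iter_pred_state_nonneg, Brun_nonneg.
Qed.

Lemma pullback_nonincreasing (k j : nat) : pullback k (S j) <= pullback k j.
Proof.
  unfold pullback; rewrite Nat.iter_succ_r, Nat.add_succ_r.
  apply iter_pred_state_mono, pred_state_Brun.
Qed.

Lemma pullback_gap (j k : nat) : 0 <= s k - pullback k j <= 2 * q - 2.
Proof.
  split.
  { rewrite <- (pullback_0 k) at 1.
    pose proof (nonincreasing_le _ (pullback_nonincreasing k) 0 j (Nat.le_0_l j)); lia. }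
  revert k; induction j as [|j IH]; intro k.
  - rewrite pullback_0; lia.
  - rewrite pullback_S.
    pose proof (pred_state_spec (pullback (S k) j)).
    specialize (IH (S k)); destruct (s_step k) as [Hw [_ Hrun]]; unfold alphB in Hw.
    (* p (s_k - r) <= q (s_(k+1) - r') + 2q - 2 <= (q + 1)(2q - 2) <= p (2q - 2) *)
    nia.
Qed.

Lemma Brun_pred_chain :
  exists r : nat -> Z, r 0%nat = 0 /\
    forall k, 0 <= r k /\ r k = pred_state (r (S k)) /\ 0 <= s k - r k <= 2 * q - 2.
Proof.
  destruct (choice _ (fun k => nonneg_seq_has_min (pullback k) (pullback_nonneg k)))
    as [j0 Hj0].
  exists (fun k => pullback k (j0 k)); split.
  { pose proof (pullback_gap (j0 0%nat) 0); pose proof (pullback_nonneg 0 (j0 0%nat)).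
    lia. }
  intro k; split; [apply pullback_nonneg|]; split; [|apply pullback_gap].
  set (J := Nat.max (j0 k) (j0 (S k))).
  rewrite <- (nonincreasing_min_stable _ _ (pullback_nonincreasing k) (Hj0 k) (S J))
    by lia.
  rewrite <- (nonincreasing_min_stable _ _ (pullback_nonincreasing (S k)) (Hj0 (S k)) J)
    by lia.
  apply pullback_S.
Qed.

End BRun.

End Backward.

Open Scope R_scope.

Lemma bounded_mul_geometric_cv0 (a : nat -> R) (C u : R) :
  (forall n, Rabs (a n) <= C) -> Rabs u < 1 -> Un_cv (fun n => a n * u ^ n) 0.
Proof.
  intros Ha Hu eps Heps.
  assert (HC : 0 < Rabs C + 1) by (pose proof (Rabs_pos C); lra).
  destruct (pow_lt_1_zero u Hu (eps / (Rabs C + 1))) as [N HN].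
  { apply Rdiv_lt_0_compat; lra. }
  exists N; intros n Hn; unfold Rdist; rewrite Rminus_0_r, Rabs_mult.
  specialize (HN n Hn); specialize (Ha n).
  assert (HaC : Rabs (a n) <= Rabs C + 1) by (pose proof (Rle_abs C); lra).
  apply Rle_lt_trans with ((Rabs C + 1) * Rabs (u ^ n)).
  - apply Rmult_le_compat_r; [apply Rabs_pos | exact HaC].
  - apply Rmult_lt_reg_l with (/ (Rabs C + 1)); [apply Rinv_0_lt_compat; lra|].
    rewrite <- Rmult_assoc, Rinv_l, Rmult_1_l by lra.
    unfold Rdiv in HN; lra.
Qed.

Lemma run_partial_sum (p q : Z) (s w : nat -> Z) :
  IZR p <> 0 -> (forall i, (q * s (S i) = s i * p + w i)%Z) -> forall n,
  sum_f_R0 (fun i => IZR (w i) * (IZR q / IZR p) ^ S i) n =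
  IZR q * IZR (s (S n)) * (IZR q / IZR p) ^ S n - IZR q * IZR (s 0%nat).
Proof.
  intros Hp Hrun.
  assert (Hw : forall i, IZR (w i) = IZR q * IZR (s (S i)) - IZR (s i) * IZR p).
  { intro i; rewrite <- !mult_IZR, <- minus_IZR; f_equal; rewrite Hrun; ring. }
  induction n as [|n IH].
  - simpl; rewrite Hw; field; exact Hp.
  - rewrite tech5, IH, Hw; simpl; field; exact Hp.
Qed.

Lemma rho_is_bounded_gap (p q : Z) (s w r v : nat -> Z) (C : Z) (x : R) :
  (0 < q < p)%Z -> s 0%nat = r 0%nat ->
  (forall i, (q * s (S i) = s i * p + w i)%Z) ->
  (forall i, (q * r (S i) = r i * p + v i)%Z) ->
  (forall n, Z.abs (s n - r n) <= C)%Z ->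
  rho_is p q w x -> rho_is p q v x.
Proof.
  intros Hqp H0 Hs Hr Hgap Hw.
  set (u := IZR q / IZR p).
  assert (Hp : IZR p <> 0) by (apply not_0_IZR; lia).
  assert (Hu : 0 < u < 1).
  { assert (0 < IZR q < IZR p) by (split; apply IZR_lt; lia).
    unfold u; split; [apply Rdiv_lt_0_compat; lra|].
    apply Rmult_lt_reg_r with (IZR p); [lra|].
    unfold Rdiv; rewrite Rmult_assoc, Rinv_l, Rmult_1_r; lra. }
  set (err := fun n => IZR q * IZR (s (S n) - r (S n)) * u ^ S n).
  assert (Herr : Un_cv err 0).
  { apply Un_cv_ext with (fun n => IZR q * IZR (s (S n) - r (S n)) * u * u ^ n).
    { intro n; unfold err; simpl; ring. }
    apply bounded_mul_geometric_cv0 with (IZR q * IZR C * 1);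
      [|rewrite Rabs_pos_eq; lra].
    intro n; specialize (Hgap (S n)).
    assert (HqR : 0 <= IZR q) by (apply IZR_le; lia).
    assert (Hd : Rabs (IZR (s (S n) - r (S n))) <= IZR C)
      by (rewrite Rabs_Zabs; apply IZR_le; exact Hgap).
    pose proof (Rabs_pos (IZR (s (S n) - r (S n)))).
    rewrite !Rabs_mult, (Rabs_pos_eq (IZR q) HqR), (Rabs_pos_eq u) by lra.
    apply Rmult_le_compat; [apply Rmult_le_pos | | apply Rmult_le_compat_l |]; lra. }
  unfold rho_is, infinite_sum.
  apply Un_cv_ext with (fun n => sum_f_R0 (fun i => IZR (w i) * u ^ S i) n - err n).
  - intro n; unfold err, u.
    rewrite (run_partial_sum p q s w Hp Hs), (run_partial_sum p q r v Hp Hr), H0,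
      minus_IZR; ring.
  - replace x with (x - 0) by ring; apply CV_minus; [exact Hw | exact Herr].
Qed.

Theorem mainTheorem12 (p q : Z) :
  (1 < q)%Z -> (q < p)%Z -> Z.gcd p q = 1%Z -> (p < 2 * q)%Z ->
  forall x : R, rho_lang p q (alphB p q) x <-> rho_lang p q (alphA p) x.
Proof.
  intros Hq Hqp _ Hp2 x; split.
  - intros [w [Hacc Hrho]]; pose proof Hacc as [s [Hs0 Hs]].
    destruct (Brun_pred_chain p q Hq Hqp s w Hs0 Hs) as [r [Hr0 Hr]].
    exists (fun i => (q * r (S i) - r i * p)%Z); split.
    + apply accepted_alphA_of_pred_chain; try lia; intro k; apply Hr.
    + apply (rho_is_bounded_gap p q s w r _ (2 * q - 2) x); try lia.
      * intro i; apply Hs.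
      * intro n; destruct (Hr n) as [_ [_ Hgap]]; lia.
      * exact Hrho.
  - intros [w [Hacc Hrho]]; exists w; split; [|exact Hrho].
    apply (accepted_sub p q (alphA p)); [|exact Hacc].
    intros a; apply alphA_sub_alphB, Hp2.
Qed.
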